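(* Over the space of $n$-variate Fourier polynomials $f$ of degree at most $d$, \[\mathbb E f^4\preceq 9^d\,(\mathbb E f^2)^2,\] where the expectations are over the uniform distribution on $\{\pm1\}^n$.
   Context: An $n$-variate Fourier polynomial of degree at most $d$ is a function $f:\{\pm1\}^n\to\mathbb R$ of the form $f=\sum_{\alpha\subseteq[n],|\alpha|\le d}\hat f_\alpha\chi_\alpha$ with $\chi_\alpha(x)=\prod_{i\in\alpha}x_i$. Both $\mathbb E f^4$ and $(\mathbb E f^2)^2$ are viewed as polynomials in the real coefficients $\{\hat f_\alpha\}_{|\alpha|\le d}$, and $P\preceq Q$ means that $Q-P$ is a sum of squares of polynomials in these coefficients. *)

From HB Require Import structures.
From mathcomp Require Import all_boot all_order all_algebra.
From mathcomp Require Import reals.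
From mathcomp Require Import mpoly.
Set Implicit Arguments. Unset Strict Implicit. Unset Printing Implicit Defensive.
Import Order.TTheory GRing.Theory Num.Theory.
Local Open Scope ring_scope.

Definition lowsets (n d : nat) : {set {set 'I_n}} := [set a : {set 'I_n} | (#|a| <= d)%N].

(* Number of coefficient variables; variable i : 'I_(nvars n d) stands for
   \hat f_alpha with alpha = enum_val i, the i-th element of lowsets n d. *)
Definition nvars (n d : nat) : nat := #|lowsets n d|.

Definition cpoly (R : realType) (n d : nat) := {mpoly R[nvars n d]}.


(* A point x of {±1}^n, encoded as x : {ffun 'I_n -> bool} with x_i = (-1)^(x i). *)
Definition pm1 (R : realType) (b : bool) : R := if b then -1 else 1.

Definition chi (R : realType) (n : nat) (a : {set 'I_n}) (x : {ffun 'I_n -> bool}) : R :=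
  \prod_(i in a) pm1 R (x i).

Definition fourier_eval (R : realType) (n d : nat) (x : {ffun 'I_n -> bool}) : cpoly R n d :=
  \sum_(i < nvars n d) chi R (enum_val i) x *: 'X_i.

Definition Eunif (R : realType) (n d : nat) (g : {ffun 'I_n -> bool} -> cpoly R n d)
  : cpoly R n d :=
  (2%:R ^- n : R) *: \sum_(x : {ffun 'I_n -> bool}) g x.

Definition Ef4 (R : realType) (n d : nat) : cpoly R n d :=
  Eunif (fun x => fourier_eval R d x ^+ 4).
Definition Ef2 (R : realType) (n d : nat) : cpoly R n d :=
  Eunif (fun x => fourier_eval R d x ^+ 2).

Definition is_sos (R : realType) (k : nat) (p : {mpoly R[k]}) : Prop :=
  exists s : seq {mpoly R[k]}, p = \sum_(q <- s) q ^+ 2.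
Definition sos_le (R : realType) (k : nat) (p q : {mpoly R[k]}) : Prop :=
  is_sos (q - p).

(* Write a degree-[d] function
   on [{±1}^(k+1)] as [F0 + x F1] with [deg F0 <= d], [deg F1 < d], and do the same
   for a second function [G = G0 + x G1].  Averaging over [x] kills the odd terms:
     E (F G)^2 = E (F0 G0)^2 + E (F1 G1)^2 + E (F0 G1)^2 + E (F1 G0)^2
                 + 4 E F0 G0 F1 G1,
   and [4 F0 G0 F1 G1 <= 2 (F0 G1)^2 + 2 (F1 G0)^2] up to the square
   [2 (F0 G1 - F1 G0)^2].  Induction on [k] then gives
   [E (F G)^2 <= 3^(deg F + deg G) E F^2 E G^2], each step being a sum of squares
   in the values of the functions; taking [F = G] gives [E F^4 <= 9^d (E F^2)^2]. *)
From HB Require Import structures.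
From mathcomp Require Import all_boot all_order all_algebra.
From mathcomp Require Import reals.
From mathcomp Require Import mpoly.
From mathcomp Require Import ring.
Set Implicit Arguments. Unset Strict Implicit. Unset Printing Implicit Defensive.
Import Order.TTheory GRing.Theory Num.Theory.
Local Open Scope ring_scope.

Section SumsOfSquares.
Variable A : comPzRingType.

Definition sos (p : A) := exists s : seq A, p = \sum_(q <- s) q ^+ 2.
Definition sos_leq (p q : A) := sos (q - p).

Lemma sos0 : sos 0. Proof. by exists [::]; rewrite big_nil. Qed.

Lemma sos_sqr q : sos (q ^+ 2). Proof. by exists [:: q]; rewrite big_seq1. Qed.

Lemma sosD p q : sos p -> sos q -> sos (p + q).
Proof. by move=> [s ->] [t ->]; exists (s ++ t); rewrite big_cat. Qed.

Lemma sosM p q : sos p -> sos q -> sos (p * q).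
Proof.
move=> [s ->] [t ->]; exists [seq x * y | x <- s, y <- t].
rewrite big_allpairs_dep mulr_suml; apply: eq_bigr => x _.
by rewrite mulr_sumr; apply: eq_bigr => y _; rewrite exprMn.
Qed.

Lemma sos_sum (I : Type) (r : seq I) (P : pred I) (F : I -> A) :
  (forall i, P i -> sos (F i)) -> sos (\sum_(i <- r | P i) F i).
Proof. by move=> sosF; apply: big_ind => //; [exact: sos0 | exact: sosD]. Qed.

Lemma sos_nat m : sos m%:R.
Proof.
elim: m => [|m IH]; first exact: sos0.
by rewrite -addn1 natrD; apply: sosD IH _; rewrite -(expr1n A 2); exact: sos_sqr.
Qed.

Lemma sos_leq_diff p q r : q - p = r -> sos r -> sos_leq p q.
Proof. by move=> <-. Qed.

Lemma sos_leq_trans p q r : sos_leq p q -> sos_leq q r -> sos_leq p r.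
Proof. by move=> pq qr; have := sosD qr pq; rewrite /sos_leq addrA subrK. Qed.

Lemma sos_leqD p q p' q' : sos_leq p q -> sos_leq p' q' -> sos_leq (p + p') (q + q').
Proof. by move=> pq pq'; have := sosD pq pq'; rewrite /sos_leq opprD addrACA. Qed.

Lemma sos_leq_mul2l c p q : sos c -> sos_leq p q -> sos_leq (c * p) (c * q).
Proof. by move=> sos_c pq; have := sosM sos_c pq; rewrite /sos_leq mulrBr. Qed.

Lemma sos_leq_natr m n p : (m <= n)%N -> sos p -> sos_leq (m%:R * p) (n%:R * p).
Proof.
move=> le_mn sos_p; have := sosM (sos_nat (n - m)) sos_p.
by rewrite /sos_leq -mulrBl natrB.
Qed.

Lemma sos_leq_sum (I : Type) (r : seq I) (f g : I -> A) :
  (forall i, sos_leq (f i) (g i)) -> sos_leq (\sum_(i <- r) f i) (\sum_(i <- r) g i).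
Proof. by move=> fg; rewrite /sos_leq -sumrB; apply: sos_sum => i _; exact: fg. Qed.

End SumsOfSquares.

Fixpoint bool_seqs (k : nat) : seq (seq bool) :=
  if k is k'.+1 then [seq true :: s | s <- bool_seqs k'] ++ [seq false :: s | s <- bool_seqs k']
  else [:: [::]].

Lemma big_bool_seqsS (V : nmodType) k (h : seq bool -> V) :
  \sum_(s <- bool_seqs k.+1) h s = \sum_(s <- bool_seqs k) (h (true :: s) + h (false :: s)).
Proof. by rewrite /= big_cat !big_map big_split. Qed.

Lemma mem_map_cons (T : eqType) (x y : T) s (E : seq (seq T)) :
  (x :: s \in [seq y :: t | t <- E]) = (x == y) && (s \in E).
Proof. by apply/mapP/andP => [[t t_E [-> ->]] | [/eqP -> s_E]] //; exists s. Qed.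

Lemma mem_bool_seqs k s : (s \in bool_seqs k) = (size s == k).
Proof.
elim: k s => [|k IH] [|b s] //=; rewrite mem_cat.
  by apply/negbTE/norP; split; apply/mapP => -[].
by rewrite !mem_map_cons eqSS -IH; case: b; rewrite ?orbF.
Qed.

Lemma uniq_bool_seqs k : uniq (bool_seqs k).
Proof.
elim: k => [//|k IH] /=; rewrite cat_uniq !map_inj_uniq // => [|s t [] //|s t [] //].
by rewrite IH andbT; apply/hasPn => _ /mapP[t _ ->]; rewrite mem_map_cons.
Qed.

Definition ffun_of_seq n (s : seq bool) : {ffun 'I_n -> bool} :=
  [ffun i : 'I_n => nth false s i].

Lemma big_ffun_bool_seqs (V : nmodType) n (h : {ffun 'I_n -> bool} -> V) :
  \sum_x h x = \sum_(s <- bool_seqs n) h (ffun_of_seq n s).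
Proof.
rewrite -(big_map (@ffun_of_seq n) xpredT); apply: perm_big.
apply: uniq_perm; first exact: index_enum_uniq.
  rewrite map_inj_in_uniq ?uniq_bool_seqs // => s t.
  rewrite !mem_bool_seqs => /eqP size_s /eqP size_t /ffunP e.
  apply: (@eq_from_nth _ false) => [|i]; first by rewrite size_s size_t.
  by rewrite size_s => lt_in; have := e (Ordinal lt_in); rewrite !ffunE.
move=> x; rewrite mem_index_enum; symmetry; apply/mapP.
exists [seq x i | i <- enum 'I_n]; first by rewrite mem_bool_seqs size_map size_enum_ord.
by apply/ffunP => i; rewrite ffunE (nth_map i) ?size_enum_ord // nth_ord_enum.
Qed.

Section Degree.
Variable A : comPzRingType.
Implicit Types (F G : seq bool -> A) (L : seq nat).

(* Fourier degree at most [d] on [{±1}^k], defined by splitting off the first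
   coordinate: [F (b :: s) = F0 s + (-1)^b F1 s] with [F0] of degree at most [d]
   and [F1] of degree less than [d] (identically zero when [d = 0]). *)
Fixpoint deg_le (k d : nat) F : Prop :=
  if k is k'.+1 then exists F0 F1,
    [/\ deg_le k' d F0,
        (if d is d'.+1 then deg_le k' d' F1 else forall s, F1 s = 0)
      & forall b s, F (b :: s) = F0 s + (-1) ^+ b * F1 s]
  else True.

Definition deg_lt k d F := if d is d'.+1 then deg_le k d' F else forall s, F s = 0.

Lemma deg_le_ext k d F G : F =1 G -> deg_le k d F -> deg_le k d G.
Proof.
case: k => [//|k] eFG [F0 [F1 [deg_F0 deg_F1 eF]]].
by exists F0, F1; split=> // b s; rewrite -eFG.
Qed.

Lemma deg_le0 k d : deg_le k d (fun=> 0).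
Proof.
elim: k d => [//|k IH] d; exists (fun=> 0), (fun=> 0); split=> //.
- by case: d.
- by move=> b s; rewrite mulr0 addr0.
Qed.

Lemma deg_lt0 k d : deg_lt k d (fun=> 0).
Proof. by case: d => [//|d]; exact: deg_le0. Qed.

Lemma deg_leD k d F G : deg_le k d F -> deg_le k d G -> deg_le k d (fun s => F s + G s).
Proof.
elim: k d F G => [//|k IH] d F G [F0 [F1 [deg_F0 deg_F1 eF]]] [G0 [G1 [deg_G0 deg_G1 eG]]].
exists (fun s => F0 s + G0 s), (fun s => F1 s + G1 s); split.
- exact: IH.
- case: d {deg_F0 deg_G0} deg_F1 deg_G1 => [|d] deg_F1 deg_G1; last exact: IH.
  by move=> s; rewrite deg_F1 deg_G1 addr0.
- by move=> b s; rewrite eF eG mulrDr addrACA.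
Qed.

Lemma deg_leMl k d c F : deg_le k d F -> deg_le k d (fun s => c * F s).
Proof.
elim: k d F => [//|k IH] d F [F0 [F1 [deg_F0 deg_F1 eF]]].
exists (fun s => c * F0 s), (fun s => c * F1 s); split.
- exact: IH.
- case: d {deg_F0} deg_F1 => [|d] deg_F1; last exact: IH.
  by move=> s; rewrite deg_F1 mulr0.
- by move=> b s; rewrite eF mulrDr mulrCA.
Qed.

Lemma deg_le_sum k d (I : Type) (r : seq I) (P : pred I) (F : I -> seq bool -> A) :
  (forall i, P i -> deg_le k d (F i)) -> deg_le k d (fun s => \sum_(i <- r | P i) F i s).
Proof.
move=> deg_F; elim: r => [|i r IH].
  by apply: deg_le_ext (deg_le0 k d) => s; rewrite big_nil.
apply: (deg_le_ext (F := fun s => (if P i then F i s else 0) + \sum_(j <- r | P j) F j s)).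
  by move=> s; rewrite big_cons; case: (P i); rewrite ?add0r.
apply: deg_leD IH; case: (P i) (deg_F i) => [/(_ isT) //|_]; exact: deg_le0.
Qed.

Definition char_seq L (s : seq bool) : A := \prod_(j <- L) (-1) ^+ nth false s j.

Lemma char_seq_cons L b s : uniq L ->
  char_seq L (b :: s) =
  (if 0%N \in L then (-1) ^+ b else 1) * char_seq (map predn (rem 0%N L)) s.
Proof.
move=> uniq_L; rewrite /char_seq big_map; case: ifP => L0.
  rewrite (perm_big _ (perm_to_rem L0)) big_cons /=; congr (_ * _).
  by apply: eq_big_seq => -[|j]; rewrite mem_rem_uniq // inE.
rewrite mul1r rem_id ?L0 //; apply: eq_big_seq => -[|j] jL //.
by rewrite jL in L0.
Qed.

Lemma deg_le_char k d L : uniq L -> (size L <= d)%N -> deg_le k d (char_seq L).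
Proof.
elim: k d L => [//|k IH] d L uniq_L size_L.
set L' := map predn (rem 0%N L).
have uniq_L' : uniq L'.
  rewrite map_inj_in_uniq ?rem_uniq // => x y.
  rewrite !mem_rem_uniq // !inE => /andP[x0 _] /andP[y0 _].
  by case: x x0 => // x _; case: y y0 => // y _ /= ->.
case L0: (0%N \in L).
- exists (fun=> 0), (char_seq L'); split; first exact: deg_le0.
  + case: d size_L => [|d] size_L.
      by move: size_L; rewrite leqn0 size_eq0 => /eqP L_nil; rewrite L_nil in L0.
    by apply: IH; rewrite // size_map size_rem // -subn1 leq_subLR add1n.
  + by move=> b s; rewrite char_seq_cons // L0 add0r.
- exists (char_seq L'), (fun=> 0); split; last 1 first.
  + by move=> b s; rewrite char_seq_cons // L0 mul1r mulr0 addr0.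
  + by apply: IH; rewrite // size_map rem_id ?L0.
  + exact: deg_lt0.
Qed.

End Degree.

Section Bonami.
Variable A : comPzRingType.
Implicit Types F G : seq bool -> A.

Definition energy k F := \sum_(s <- bool_seqs k) F s ^+ 2.

Definition moment22 k F G := 2 ^+ k * \sum_(s <- bool_seqs k) (F s * G s) ^+ 2.

Lemma energy_sos k F : sos (energy k F).
Proof. by apply: sos_sum => s _; exact: sos_sqr. Qed.

Lemma moment22C k F G : moment22 k F G = moment22 k G F.
Proof. by congr (_ * _); apply: eq_bigr => s _; rewrite mulrC. Qed.

Lemma moment22_eq0 k F G : (forall s, F s = 0) -> moment22 k F G = 0.
Proof. by move=> F0; rewrite /moment22 big1 ?mulr0 // => s _; rewrite F0 mul0r expr0n. Qed.

Section Decomposition.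
Variables (k : nat) (F G F0 F1 G0 G1 : seq bool -> A).
Hypothesis eF : forall b s, F (b :: s) = F0 s + (-1) ^+ b * F1 s.
Hypothesis eG : forall b s, G (b :: s) = G0 s + (-1) ^+ b * G1 s.

Lemma energy_cons : energy k.+1 F = 2 * (energy k F0 + energy k F1).
Proof.
rewrite /energy big_bool_seqsS -big_split mulr_sumr.
by apply: eq_bigr => s _; rewrite !eF /=; ring.
Qed.

Lemma moment22_cons : sos_leq (moment22 k.+1 F G)
  (4 * (moment22 k F0 G0 + moment22 k F1 G1 + 3 * moment22 k F0 G1 + 3 * moment22 k F1 G0)).
Proof.
rewrite /moment22 big_bool_seqsS !mulr_sumr -!big_split mulr_sumr /=.
apply: sos_leq_sum => s.
apply: (sos_leq_diff (r := 2 ^+ k * 8%:R * (F0 s * G1 s - F1 s * G0 s) ^+ 2)).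
  by rewrite !eF !eG [2 ^+ k.+1]exprS /=; set t := 2 ^+ k; ring.
by rewrite -[2 ^+ k]natrX -natrM; apply: sosM; [exact: sos_nat | exact: sos_sqr].
Qed.

End Decomposition.

(* Sums over [bool_seqs k] are [2^k] times expectations, so this reads
   [E (F G)^2 <= 3^(d1+d2) E F^2 E G^2]. *)
Definition bonami_bound k d1 d2 F G :=
  sos_leq (moment22 k F G) ((3 ^ (d1 + d2))%N%:R * (energy k F * energy k G)).

Lemma bonami_bound_eq0 k c d1 d2 F G : (forall s, F s = 0) ->
  sos_leq (c * moment22 k F G) ((3 ^ (d1 + d2))%N%:R * (energy k F * energy k G)).
Proof.
move=> F0; rewrite moment22_eq0 // mulr0 /sos_leq subr0.
by apply: sosM; [exact: sos_nat | apply: sosM; exact: energy_sos].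
Qed.

Section BonamiStep.
Variable k : nat.
Hypothesis IH : forall d1 d2 F G, deg_le k d1 F -> deg_le k d2 G -> bonami_bound k d1 d2 F G.

Lemma bonami_bound_lt_le d1 d2 F G : deg_lt k d1 F -> deg_le k d2 G ->
  sos_leq (3 * moment22 k F G) ((3 ^ (d1 + d2))%N%:R * (energy k F * energy k G)).
Proof.
case: d1 => [|d1] deg_F deg_G; first exact: bonami_bound_eq0.
have := sos_leq_mul2l (sos_nat _ 3) (IH deg_F deg_G).
by rewrite mulrA -natrM -expnS.
Qed.

Lemma bonami_bound_le_lt d1 d2 F G : deg_le k d1 F -> deg_lt k d2 G ->
  sos_leq (3 * moment22 k F G) ((3 ^ (d1 + d2))%N%:R * (energy k F * energy k G)).
Proof.
move=> deg_F deg_G; rewrite moment22C [energy k F * _]mulrC addnC.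
exact: bonami_bound_lt_le.
Qed.

Lemma bonami_bound_lt_lt d1 d2 F G : deg_lt k d1 F -> deg_lt k d2 G ->
  bonami_bound k d1 d2 F G.
Proof.
rewrite /bonami_bound; case: d1 => [|d1] deg_F.
  by move=> _; rewrite -[moment22 k F G]mul1r; exact: bonami_bound_eq0.
case: d2 => [|d2] deg_G.
  rewrite moment22C [energy k F * _]mulrC addnC -[moment22 k G F]mul1r.
  exact: bonami_bound_eq0.
apply: sos_leq_trans (IH deg_F deg_G) _; apply: sos_leq_natr.
  by rewrite leq_exp2l // addnS addSn leqW.
by apply: sosM; exact: energy_sos.
Qed.

End BonamiStep.

Theorem bonami_sos k d1 d2 F G : deg_le k d1 F -> deg_le k d2 G -> bonami_bound k d1 d2 F G.
Proof.
elim: k d1 d2 F G => [|k IH] d1 d2 F G.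
  move=> _ _; rewrite /bonami_bound /moment22 /energy !big_seq1 expr0 mul1r -exprMn.
  rewrite -[X in sos_leq X]mul1r.
  by apply: (sos_leq_natr (m := 1)); [rewrite expn_gt0 | exact: sos_sqr].
move=> [F0 [F1 [deg_F0 deg_F1 eF]]] [G0 [G1 [deg_G0 deg_G1 eG]]].
rewrite /bonami_bound (energy_cons k eF) (energy_cons k eG).
apply: sos_leq_trans (moment22_cons k eF eG) _.
have := sos_leq_mul2l (sos_nat _ 4) (sos_leqD (sos_leqD (sos_leqD
  (IH _ _ _ _ deg_F0 deg_G0) (bonami_bound_lt_lt IH deg_F1 deg_G1))
  (bonami_bound_le_lt IH deg_F0 deg_G1)) (bonami_bound_lt_le IH deg_F1 deg_G0)).
by rewrite /sos_leq; congr sos; ring.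
Qed.

End Bonami.

Corollary hypercontractive_sos (A : comPzRingType) k d (F : seq bool -> A) : deg_le k d F ->
  sos_leq (2 ^+ k * \sum_(s <- bool_seqs k) F s ^+ 4) ((9 ^ d)%N%:R * energy k F ^+ 2).
Proof.
move=> deg_F; have := bonami_sos deg_F deg_F.
rewrite /bonami_bound /moment22 addnn -mul2n expnM -expr2.
by under eq_bigr do rewrite -expr2 -exprM.
Qed.

Lemma chi_ffun_of_seq (R : realType) (A : comAlgType R) n (a : {set 'I_n}) s :
  chi R a (ffun_of_seq n s) *: (1 : A) = char_seq A [seq val i | i <- enum a] s.
Proof.
rewrite /char_seq big_map big_enum -[LHS]/(in_alg A _) rmorph_prod; apply: eq_bigr => i _.
by rewrite ffunE /pm1; case: (nth _ _ _); rewrite ?expr1 ?expr0 ?rmorphN1 ?rmorph1.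
Qed.

Lemma fourier_eval_seq (R : realType) n d s :
  fourier_eval R d (ffun_of_seq n s) =
  \sum_(i < nvars n d) 'X_i * char_seq _ [seq val j | j <- enum (enum_val i)] s.
Proof. by apply: eq_bigr => i _; rewrite -chi_ffun_of_seq mulr_algr. Qed.

Lemma deg_le_fourier (R : realType) n d :
  deg_le n d (fun s => fourier_eval R d (ffun_of_seq n s)).
Proof.
apply: deg_le_ext (fun s => esym (fourier_eval_seq R n d s)) _.
apply: deg_le_sum => i _; apply: deg_leMl; apply: deg_le_char.
  by rewrite map_inj_uniq ?enum_uniq //; exact: val_inj.
by rewrite size_map -cardE; have := enum_valP i; rewrite inE.
Qed.

Theorem lemma5p1 (R : realType) (n d : nat) :
  sos_le (Ef4 R n d) ((9 ^ d)%N%:R *: (Ef2 R n d ^+ 2)).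
Proof.
have := hypercontractive_sos (deg_le_fourier R n d).
rewrite /sos_le /Ef4 /Ef2 /Eunif /energy !big_ffun_bool_seqs.
set c : R := 2%:R ^- n.
set X := \sum_(s <- _) _ ^+ 2; set Y := \sum_(s <- _) _ ^+ 4.
have c2n : c ^+ 2 * (2 ^ n)%:R = c.
  by rewrite expr2 -mulrA natrX mulVf ?mulr1 // expf_neq0 // pnatr_eq0.
have -> : (9 ^ d)%N%:R *: (c *: X) ^+ 2 - c *: Y =
          c%:A ^+ 2 * ((9 ^ d)%N%:R * X ^+ 2 - 2 ^+ n * Y).
  rewrite mulrBr -natrX !mulr_natl -!scaler_nat exprZn [c%:A ^+ 2]exprZn expr1n.
  by rewrite !mulr_algl !scalerA c2n mulrC.
by move=> hyp; apply: sosM hyp; exact: sos_sqr.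
Qed.
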